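(* Let $j\in\mathbb N_0$ and let $s_0,\dots,s_{2j+2}$ be Hermitian $q\times q$ matrices such that $(s_{l+k})_{l,k=0}^{j}$ and $(s_{l+k+1})_{l,k=0}^{j}$ are positive definite. Take $a=0$. Then for all sufficiently large $b>0$ the matrices $K_{1,j}$ and $H_{2,j}$ (formed with $a=0$ and this $b$) are positive definite, so that $\mathbf m_j(0,b)$ and $\mathbf l_j(0,b)$ are defined, and $$\mathbf M_j(0)=\lim_{b\to+\infty} b\,\mathbf m_j(0,b),\qquad \mathbf L_j(0)=\lim_{b\to+\infty} b^{-1}\,\mathbf l_j(0,b).$$
   Context: All matrices are complex, $q\in\mathbb N$, $I_q$, $0_q$ are the $q\times q$ identity and zero matrices. For real $a<b$ set $\widehat s_i:=-ab\,s_i+(a+b)s_{i+1}-s_{i+2}$, $H_{1,i}:=(s_{l+k})_{l,k=0}^i$, $H_{2,i}:=(\widehat s_{l+k})_{l,k=0}^{i}$, $K_{1,i}:=(bs_{l+k}-s_{l+k+1})_{l,k=0}^{i}$, $K_{2,i}:=(-as_{l+k}+s_{l+k+1})_{l,k=0}^i$. Let $T_0:=0_q$ and, for $i\ge1$, let $T_i$ be the $(i+1)\times(i+1)$ block matrix with $I_q$ in block positions $(l+1,l)$ and $0_q$ elsewhere; $R_i(z):=(I-zT_i)^{-1}$; $v_i:=\mathrm{col}(I_q,0_q,\dots,0_q)\in\mathbb C^{(i+1)q\times q}$. Let $u_{2,0}:=-(a+b)s_0+s_1$, $u_{2,i}:=\mathrm{col}(u_{2,0},-\widehat s_0,\dots,-\widehat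 s_{i-1})$, $\widetilde u_{2,i}:=\mathrm{col}(-s_0,as_0-s_1,\dots,as_{i-1}-s_i)$. New DSM parameters (depending on $a,b$): $\lambda_i:=(u_{2,i}+av_is_0)^*R_i(a)^*H_{2,i}^{-1}R_i(a)(u_{2,i}+av_is_0)$, $\mu_i:=v_i^*R_i(a)^*K_{1,i}^{-1}R_i(a)v_i$; $\mathbf l_0(a,b):=\lambda_0$, $\mathbf l_i(a,b):=\lambda_i-\lambda_{i-1}$ ($i\ge1$); $\mathbf m_0(a,b):=\mu_0$, $\mathbf m_i(a,b):=\mu_i-\mu_{i-1}$ ($i\ge1$). Earlier DSM parameters (depending only on $a$): $\mathbf M_0(a):=s_0^{-1}$, $\mathbf M_i(a):=v_i^*R_i(a)^*H_{1,i}^{-1}R_i(a)v_i-v_{i-1}^*R_{i-1}(a)^*H_{1,i-1}^{-1}R_{i-1}(a)v_{i-1}$ ($i\ge1$); $\mathbf L_0(a):=\widetilde u_{2,0}^*K_{2,0}^{-1}\widetilde u_{2,0}$, $\mathbf L_i(a):=\widetilde u_{2,i}^*R_i(a)^*K_{2,i}^{-1}R_i(a)\widetilde u_{2,i}-\widetilde u_{2,i-1}^*R_{i-1}(a)^*K_{2,i-1}^{-1}R_{i-1}(a)\widetilde u_{2,i-1}$ ($i\ge1$). At $a=0$, $\mathbf M_j(0)$ and $\mathbf L_j(0)$ are the Dyukarev–Stieltjes parameters of the truncated Stieltjes matrix moment problem. *)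

(* Complex matrices are modelled over an arbitrary
   numClosedFieldType C (e.g. algC). *)
From HB Require Import structures.
From mathcomp Require Import all_boot all_order all_algebra.
Set Implicit Arguments. Unset Strict Implicit. Unset Printing Implicit Defensive.
Import Order.TTheory GRing.Theory Num.Theory.
Local Open Scope ring_scope.

Section DSM.
Variable C : numClosedFieldType.

Definition adj m n (A : 'M[C]_(m, n)) : 'M[C]_(n, m) := (map_mx Num.conj A)^T.

Definition posdef n (A : 'M[C]_n) : Prop :=
  adj A = A /\ forall x : 'cV[C]_n, x != 0 -> 0 < (adj x *m A *m x) 0 0.

Definition bdim (q i : nat) : nat := (\sum_(l < i.+1) q)%N.

Definition bhank (q i : nat) (f : nat -> 'M[C]_q) : 'M[C]_(bdim q i) :=
  @mxblock C i.+1 i.+1 (fun _ => q) (fun _ => q) (fun l k => f (l + k)%N).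

Definition Tm (q i : nat) : 'M[C]_(bdim q i) :=
  @mxblock C i.+1 i.+1 (fun _ => q) (fun _ => q)
    (fun l k => if (l : nat) == k.+1 then 1%:M else 0).

Definition Rm (q i : nat) (z : C) : 'M[C]_(bdim q i) :=
  invmx (1%:M - z *: Tm q i).

Definition bcol (q i : nat) (f : nat -> 'M[C]_q) : 'M[C]_(bdim q i, q) :=
  @mxcol C i.+1 (fun _ => q) q (fun l => f (l : nat)).

Definition vv (q i : nat) : 'M[C]_(bdim q i, q) :=
  @bcol q i (fun l => if l == 0%N then 1%:M else 0).

Variable q : nat.
Variable s : nat -> 'M[C]_q.

Definition shat (a b : C) (n : nat) : 'M[C]_q :=
  - (a * b) *: s n + (a + b) *: s n.+1 - s n.+2.

Definition H1 (i : nat) := bhank i s.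
Definition H2 (a b : C) (i : nat) := bhank i (shat a b).
Definition K1 (b : C) (i : nat) := bhank i (fun n => b *: s n - s n.+1).
Definition K2 (a : C) (i : nat) := bhank i (fun n => - a *: s n + s n.+1).

Definition u20 (a b : C) : 'M[C]_q := - (a + b) *: s 0 + s 1.
Definition u2 (a b : C) (i : nat) : 'M[C]_(bdim q i, q) :=
  bcol i (fun l => if l == 0%N then u20 a b else - shat a b l.-1).
Definition ut2 (a : C) (i : nat) : 'M[C]_(bdim q i, q) :=
  bcol i (fun l => if l == 0%N then - s 0 else a *: s l.-1 - s l).

Definition lam (a b : C) (i : nat) : 'M[C]_q :=
  let w := u2 a b i + a *: (vv q i *m s 0) in
  adj w *m adj (Rm q i a) *m invmx (H2 a b i) *m Rm q i a *m w.
Definition mu (a b : C) (i : nat) : 'M[C]_q :=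
  adj (vv q i) *m adj (Rm q i a) *m invmx (K1 b i) *m Rm q i a *m vv q i.

Definition lpar (a b : C) (i : nat) : 'M[C]_q :=
  if i is i'.+1 then lam a b i - lam a b i' else lam a b 0.
Definition mpar (a b : C) (i : nat) : 'M[C]_q :=
  if i is i'.+1 then mu a b i - mu a b i' else mu a b 0.

Definition Mnu (a : C) (i : nat) : 'M[C]_q :=
  adj (vv q i) *m adj (Rm q i a) *m invmx (H1 i) *m Rm q i a *m vv q i.
Definition Lnu (a : C) (i : nat) : 'M[C]_q :=
  adj (ut2 a i) *m adj (Rm q i a) *m invmx (K2 a i) *m Rm q i a *m ut2 a i.

Definition Mpar (a : C) (i : nat) : 'M[C]_q :=
  if i is i'.+1 then Mnu a i - Mnu a i' else invmx (s 0).
Definition Lpar (a : C) (i : nat) : 'M[C]_q :=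
  if i is i'.+1 then Lnu a i - Lnu a i'
  else adj (ut2 a 0) *m invmx (K2 a 0) *m ut2 a 0.

End DSM.

Definition mxlim_infty (C : numClosedFieldType) m n
  (F : C -> 'M[C]_(m, n)) (L : 'M[C]_(m, n)) : Prop :=
  forall eps : C, 0 < eps -> exists B : C, B \is Num.real /\
    forall b : C, B < b -> forall i j, `|F b i j - L i j| < eps.

(* At a = 0 all resolvents R_i(0) are the identity.  With the Hankel matrices
   H := (s_{l+k}), A := (s_{l+k+1}), D := (s_{l+k+2}) and the block columns
   c := col(s_0, ..., s_i), d := col(s_1, ..., s_{i+1}) one gets K_{1,i} = b H - A,
   H_{2,i} = b A - D and u_{2,i} = -(b c - d).  If H is positive definite and G is
   Hermitian, the quadratic form of b H - G dominates a positive multiple of b |x|^2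
   for large b, so b H - G is positive definite and (b H - G)^{-1} = O(1/b).  The
   resolvent identity b (b H - G)^{-1} = H^{-1} + (b H - G)^{-1} G H^{-1} then gives
   b mu_i(0, b) = M_i + O(1/b), and writing b c - d = (b A - D) A^{-1} c + e with e
   independent of b gives lambda_i(0, b) / b = c^* A^{-1} c + O(1/b) = L_i + O(1/b).
   The parameters are differences of consecutive such quantities; the smaller
   Hankel matrices are compressions of the larger ones, hence positive definite too. *)

From HB Require Import structures.
From mathcomp Require Import all_boot all_order all_algebra.
From mathcomp Require Import ring zify.
Set Implicit Arguments. Unset Strict Implicit. Unset Printing Implicit Defensive.
Import Order.TTheory GRing.Theory Num.Theory.
Local Open Scope ring_scope.

Section Adjoint.
Variable C : numClosedFieldType.

Lemma adj_mxE m n (A : 'M[C]_(m, n)) i j : adj A i j = (A j i)^*.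
Proof. by rewrite !mxE. Qed.

Lemma adjK m n (A : 'M[C]_(m, n)) : adj (adj A) = A.
Proof. by apply/matrixP=> i j; rewrite !mxE conjCK. Qed.

Lemma adjM m n p (A : 'M[C]_(m, n)) (B : 'M[C]_(n, p)) :
  adj (A *m B) = adj B *m adj A.
Proof. by rewrite /adj map_mxM trmx_mul. Qed.

Lemma adjD m n (A B : 'M[C]_(m, n)) : adj (A + B) = adj A + adj B.
Proof. by rewrite /adj map_mxD linearD. Qed.

Lemma adjN m n (A : 'M[C]_(m, n)) : adj (- A) = - adj A.
Proof. by rewrite /adj map_mxN linearN. Qed.

Lemma adjB m n (A B : 'M[C]_(m, n)) : adj (A - B) = adj A - adj B.
Proof. by rewrite adjD adjN. Qed.

Lemma adjZ m n a (A : 'M[C]_(m, n)) : adj (a *: A) = a^* *: adj A.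
Proof. by rewrite /adj map_mxZ linearZ. Qed.

Lemma adj0 m n : adj (0 : 'M[C]_(m, n)) = 0.
Proof. by rewrite /adj map_mx0 trmx0. Qed.

Lemma adj1 n : adj (1%:M : 'M[C]_n) = 1%:M.
Proof. by rewrite /adj map_mx1 trmx1. Qed.

Lemma adj_invmx n (A : 'M[C]_n) : A \in unitmx -> adj (invmx A) = invmx (adj A).
Proof.
move=> uA; have hA : adj A *m adj (invmx A) = 1%:M by rewrite -adjM mulVmx // adj1.
have [uAA _] := mulmx1_unit hA.
by rewrite -[LHS]mul1mx -(mulVmx uAA) -mulmxA hA mulmx1.
Qed.

Lemma posdef_conj_isometry m n (Y : 'M[C]_m) (E : 'M[C]_(m, n)) :
  adj E *m E = 1%:M -> posdef Y -> posdef (adj E *m Y *m E).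
Proof.
move=> hE [hY pY]; split; first by rewrite !adjM adjK hY mulmxA.
move=> x nx; have := pY (E *m x); rewrite adjM !mulmxA; apply.
by apply: contraNneq nx => Ex0; rewrite -[x]mul1mx -hE -mulmxA Ex0 mulmx0.
Qed.

Lemma invmx_conj_unitary m n (Y : 'M[C]_m) (U : 'M[C]_(m, n)) :
  adj U *m U = 1%:M -> U *m adj U = 1%:M -> Y \in unitmx ->
  invmx (adj U *m Y *m U) = adj U *m invmx Y *m U.
Proof.
move=> hU1 hU2 uY.
have h : adj U *m Y *m U *m (adj U *m invmx Y *m U) = 1%:M.
  by rewrite !mulmxA -(mulmxA _ U) hU2 mulmx1 -(mulmxA _ Y) mulmxV // mulmx1 hU1.
have [uX _] := mulmx1_unit h.
by rewrite -[LHS]mulmx1 -h mulKmx.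
Qed.

Lemma mulmx_invmx_expand m p (P : 'M[C]_m) (X U : 'M[C]_(p, m)) (Y V : 'M[C]_(m, p)) :
  P \in unitmx -> (X *m P + U) *m invmx P *m (P *m Y + V) =
    X *m P *m Y + X *m V + U *m Y + U *m invmx P *m V.
Proof.
move=> uP; rewrite !(mulmxDl, mulmxDr) !mulmxA !(mulmxK uP) (mulmxKV uP).
by rewrite addrACA !addrA.
Qed.

End Adjoint.

Section QuadraticForms.
Variables (C : numClosedFieldType) (n : nat).
Implicit Types (A H P : 'M[C]_n) (x y : 'cV[C]_n).

Definition qform A x := (adj x *m A *m x) 0 0.
Definition sqnorm x := (adj x *m x) 0 0.
Definition l1norm {m p} (M : 'M[C]_(m, p)) := \sum_i \sum_j `|M i j|.

Lemma l1norm_ge0 m p (M : 'M[C]_(m, p)) : 0 <= l1norm M.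
Proof. by rewrite sumr_ge0 // => i _; rewrite sumr_ge0. Qed.

Lemma ler_entry_l1norm m p (M : 'M[C]_(m, p)) i j : `|M i j| <= l1norm M.
Proof.
rewrite /l1norm (bigD1 i) //= (bigD1 j) //= -addrA lerDl addr_ge0 ?sumr_ge0 //.
by move=> k _; rewrite sumr_ge0.
Qed.

Lemma sqnormE x : sqnorm x = \sum_i `|x i 0| ^+ 2.
Proof. by rewrite /sqnorm !mxE; apply: eq_bigr => i _; rewrite adj_mxE normCKC. Qed.

Lemma sqnorm_ge0 x : 0 <= sqnorm x.
Proof. by rewrite sqnormE sumr_ge0 // => i _; rewrite exprn_ge0. Qed.

Lemma ler_entry_sqnorm x i : `|x i 0| ^+ 2 <= sqnorm x.
Proof. by rewrite sqnormE (bigD1 i) //= lerDl sumr_ge0 // => k _; rewrite exprn_ge0. Qed.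

Lemma sqnorm_gt0 x : x != 0 -> 0 < sqnorm x.
Proof.
move=> nx; rewrite lt_def sqnorm_ge0 andbT; apply: contraNneq nx => x0.
apply/eqP/matrixP => i k; rewrite (ord1 k) mxE; apply/eqP.
have := ler_entry_sqnorm x i; rewrite x0 => hle.
have /eqP : `|x i 0| ^+ 2 = 0 by apply/eqP; rewrite eq_le hle exprn_ge0.
by rewrite expf_eq0 /= normr_eq0.
Qed.

Lemma ler_mul_entry_sqnorm x i k : `|x i 0| * `|x k 0| <= sqnorm x.
Proof.
have [hik|hki] := real_leP (normr_real (x i 0)) (normr_real (x k 0)).
  by apply: le_trans (ler_entry_sqnorm x k); rewrite expr2 ler_wpM2r.
by apply: le_trans (ler_entry_sqnorm x i); rewrite expr2 ler_wpM2l // ltW.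
Qed.

Lemma norm_qform_le A x : `|qform A x| <= l1norm A * sqnorm x.
Proof.
have -> : qform A x = \sum_k \sum_i (x i 0)^* * A i k * x k 0.
  rewrite /qform !mxE; apply: eq_bigr => k _.
  by rewrite !mxE mulr_suml; apply: eq_bigr => i _; rewrite adj_mxE.
apply: le_trans (ler_norm_sum _ _ _) _.
rewrite /l1norm exchange_big /= mulr_suml; apply: ler_sum => k _.
apply: le_trans (ler_norm_sum _ _ _) _; rewrite mulr_suml; apply: ler_sum => i _.
rewrite !normrM norm_conjC mulrAC mulrC.
by rewrite ler_wpM2l ?ler_mul_entry_sqnorm.
Qed.

Lemma qform_real A x : adj A = A -> qform A x \is Num.real.
Proof.
by move=> hA; apply/CrealP; rewrite /qform -adj_mxE !adjM adjK hA mulmxA.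
Qed.

Lemma qform_scale_sub (b : C) H P x : qform (b *: H - P) x = b * qform H x - qform P x.
Proof. by rewrite /qform mulmxBr mulmxBl -scalemxAr -scalemxAl !mxE. Qed.

Lemma qform_sub_scale A x y (t : C) : t \is Num.real ->
  qform A (x - t *: y) = qform A x - t * ((adj x *m A *m y) 0 0 + (adj y *m A *m x) 0 0)
     + t ^+ 2 * qform A y.
Proof.
move=> tr; rewrite /qform adjB adjZ (conj_Creal tr) !(mulmxBl, mulmxBr).
by rewrite -!scalemxAr -!scalemxAl !mxE; ring.
Qed.

Lemma posdef_qform_ge0 A : posdef A -> forall x, 0 <= qform A x.
Proof.
case=> _ hA x; have [->|nx] := eqVneq x 0; last exact/ltW/hA.
by rewrite /qform mulmx0 mxE.
Qed.

Lemma posdef_unitmx A : posdef A -> A \in unitmx.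
Proof.
move=> hA; rewrite unitmxE unitfE; apply/negP => /det0P [v nv hv].
have : 0 < qform A (adj v).
  case: hA => _; apply; apply: contraNneq nv => v0.
  by rewrite -[v]adjK v0 adj0.
by rewrite /qform adjK hv mul0mx mxE ltxx.
Qed.

Lemma coercive_posdef (mu : C) P : adj P = P -> 0 < mu ->
  (forall x, mu * sqnorm x <= qform P x) -> posdef P.
Proof.
move=> hP mu0 hmu; split=> // x nx.
by apply: lt_le_trans (hmu x); rewrite mulr_gt0 // sqnorm_gt0.
Qed.

(* 0 <= qform H (x - t H^{-1} x) = qform H x - 2 t |x|^2 + t^2 qform H^{-1} x,
   and t := 1 / (1 + l1norm H^{-1}) makes the last term at most t |x|^2. *)
Lemma posdef_coercive H : posdef H ->
  exists2 mu : C, 0 < mu & forall x, mu * sqnorm x <= qform H x.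
Proof.
move=> pH; have uH := posdef_unitmx pH; have [hH _] := pH.
set Hi := invmx H; set S := l1norm Hi.
have hHi : adj Hi = Hi by rewrite adj_invmx // hH.
have S1_gt0 : 0 < S + 1 by apply: lt_le_trans ltr01 _; rewrite lerDr l1norm_ge0.
set t := (S + 1)^-1.
have t0 : 0 < t by rewrite invr_gt0.
have tS : t * S <= 1 by rewrite ler_pdivrMl // mulr1 lerDl ler01.
exists t => // x.
have e1 : (adj x *m H *m (Hi *m x)) 0 0 = sqnorm x.
  by rewrite mulmxA -(mulmxA _ H) mulmxV // mulmx1.
have e2 : (adj (Hi *m x) *m H *m x) 0 0 = sqnorm x.
  by rewrite adjM hHi -!mulmxA (mulmxA Hi) mulVmx // mul1mx.
have e3 : qform H (Hi *m x) = qform Hi x.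
  by rewrite /qform adjM hHi -!mulmxA (mulmxA H) mulmxV // mul1mx.
have ge := posdef_qform_ge0 pH (x - t *: (Hi *m x)).
rewrite qform_sub_scale ?gtr0_real // e1 e2 e3 in ge.
have gS : qform Hi x <= S * sqnorm x.
  exact: le_trans (real_ler_norm (qform_real x hHi)) (norm_qform_le Hi x).
have hg : t ^+ 2 * qform Hi x <= t * sqnorm x.
  apply: le_trans (_ : t ^+ 2 * (S * sqnorm x) <= _).
    by rewrite ler_wpM2l ?exprn_ge0 // ltW.
  rewrite expr2 -mulrA; apply: ler_wpM2l; first exact: ltW.
  by rewrite mulrA ler_piMl ?sqnorm_ge0.
rewrite -(lerD2r (t * sqnorm x)).
apply: le_trans (_ : _ <= qform H x + t ^+ 2 * qform Hi x) _; last by rewrite lerD2l.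
by rewrite -mulrDr -subr_ge0 addrAC.
Qed.

(* Apply coercivity to the k-th column y of P^{-1}: then y^* P y = conj (y k). *)
Lemma coercive_invmx_entry (mu : C) P : adj P = P -> 0 < mu ->
  (forall x, mu * sqnorm x <= qform P x) -> forall l k, mu * `|invmx P l k| <= 1.
Proof.
move=> hP mu0 hmu l k; have uP := posdef_unitmx (coercive_posdef hP mu0 hmu).
set y := col k (invmx P).
have yE m : y m 0 = invmx P m k by rewrite /y mxE.
have Py : qform P y = (y k 0)^*.
  have Pyk : P *m y = delta_mx k 0 by rewrite /y colE mulmxA mulmxV // mul1mx.
  by rewrite /qform -mulmxA Pyk -colE mxE adj_mxE.
have hl m : mu * `|y m 0| ^+ 2 <= `|y k 0|.
  apply: le_trans (_ : mu * sqnorm y <= _).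
    by rewrite ler_wpM2l ?ler_entry_sqnorm // ltW.
  apply: le_trans (hmu y) _; rewrite -norm_conjC -Py.
  exact: real_ler_norm (qform_real y hP).
have hk : mu * `|y k 0| <= 1.
  have [->|nz] := eqVneq `|y k 0| 0; first by rewrite mulr0 ler01.
  have zp : 0 < `|y k 0| by rewrite lt_def nz normr_ge0.
  by rewrite -(ler_pM2r zp) mul1r -mulrA -expr2 hl.
rewrite -yE -(expr_le1 (n := 2)) //; last by rewrite mulr_ge0 ?normr_ge0 // ltW.
rewrite exprMn expr2 -mulrA; apply: le_trans hk.
by apply: ler_wpM2l; [exact: ltW | exact: hl].
Qed.

End QuadraticForms.

Section Eventually.
Variable C : numClosedFieldType.
Implicit Types (P Q : C -> Prop) (c : C).

(* [B < b] forces [b] to be real: this is the filter [b -> +oo] along the reals. *)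
Definition eventually P := exists2 B : C, 0 <= B & forall b, B < b -> P b.

Lemma eventually_gt c : 0 <= c -> eventually (fun b => c < b).
Proof. by exists c. Qed.

Lemma eventuallyW P Q : (forall b, 0 < b -> P b -> Q b) -> eventually P -> eventually Q.
Proof.
by move=> PQ [B B0 hP]; exists B => // b hb; apply: PQ (hP _ hb); apply: le_lt_trans hb.
Qed.

Lemma eventually_and P Q : eventually P -> eventually Q -> eventually (fun b => P b /\ Q b).
Proof.
move=> [B1 B10 h1] [B2 B20 h2]; exists (B1 + B2); first exact: addr_ge0.
move=> b hb; split; [apply: h1 | apply: h2]; apply: le_lt_trans hb.
  by rewrite lerDl.
by rewrite lerDr.
Qed.

Definition bounded m p (F : C -> 'M[C]_(m, p)) :=
  exists K : C, eventually (fun b => forall i j, `|F b i j| <= K).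

Definition asymptotic m p (F : C -> 'M[C]_(m, p)) (L : 'M[C]_(m, p)) :=
  exists2 E : C -> 'M[C]_(m, p), bounded E &
    eventually (fun b => F b = L + b^-1 *: E b).

Lemma bounded_cst m p (A : 'M[C]_(m, p)) : bounded (fun _ => A).
Proof. by exists (l1norm A); exists 0 => // b _ i j; apply: ler_entry_l1norm. Qed.

Lemma boundedD m p (F G : C -> 'M[C]_(m, p)) :
  bounded F -> bounded G -> bounded (fun b => F b + G b).
Proof.
move=> [K1 hF] [K2 hG]; exists (K1 + K2).
apply: eventuallyW (eventually_and hF hG) => b _ [hFb hGb] i j.
by rewrite mxE (le_trans (ler_normD _ _)) ?lerD.
Qed.

Lemma boundedN m p (F : C -> 'M[C]_(m, p)) : bounded F -> bounded (fun b => - F b).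
Proof.
by move=> [K hF]; exists K; apply: eventuallyW hF => b _ hFb i j; rewrite mxE normrN.
Qed.

Lemma boundedM m n p (F : C -> 'M[C]_(m, n)) (G : C -> 'M[C]_(n, p)) :
  bounded F -> bounded G -> bounded (fun b => F b *m G b).
Proof.
move=> [K1 hF] [K2 hG]; exists ((K1 * K2) *+ n).
apply: eventuallyW (eventually_and hF hG) => b _ [hFb hGb] i j.
rewrite mxE (le_trans (ler_norm_sum _ _ _)) // -[n in X in _ <= X]card_ord -sumr_const.
by apply: ler_sum => k _; rewrite normrM ler_pM.
Qed.

Lemma eq_asymptotic m p (F G : C -> 'M[C]_(m, p)) L :
  (forall b, F b = G b) -> asymptotic G L -> asymptotic F L.
Proof. by move=> FG [E hE hG]; exists E => //; apply: eventuallyW hG => b _; rewrite FG. Qed.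

Lemma asymptoticB m p (F1 F2 : C -> 'M[C]_(m, p)) L1 L2 :
  asymptotic F1 L1 -> asymptotic F2 L2 -> asymptotic (fun b => F1 b - F2 b) (L1 - L2).
Proof.
move=> [E1 hE1 h1] [E2 hE2 h2]; exists (fun b => E1 b - E2 b).
  exact: boundedD (boundedN hE2).
apply: eventuallyW (eventually_and h1 h2) => b _ [-> ->].
by rewrite scalerBr opprD addrACA.
Qed.

Lemma asymptotic_lim m p (F : C -> 'M[C]_(m, p)) L : asymptotic F L -> mxlim_infty F L.
Proof.
move=> [E [K hE] hF] eps eps0.
have Keps0 : 0 <= `|K| / eps by rewrite divr_ge0 // ltW.
have [B B0 hB] := eventually_and (eventually_and hE hF) (eventually_gt Keps0).
exists B; split=> [|b /hB [[hEb ->]] hb i j]; first exact: ger0_real.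
have b0 : 0 < b by apply: le_lt_trans hb.
rewrite !mxE addrAC subrr add0r normrM normfV (gtr0_norm b0).
apply: le_lt_trans (_ : b^-1 * `|K| < _).
  apply: ler_wpM2l; first by rewrite invr_ge0 ltW.
  have K0 : K \is Num.real by apply: ger0_real; apply: le_trans (hEb i j).
  exact: le_trans (hEb i j) (real_ler_norm K0).
by rewrite ltr_pdivrMl // -ltr_pdivrMr.
Qed.

End Eventually.

Section ScaleSub.
Variables (C : numClosedFieldType) (n : nat) (H G : 'M[C]_n).
Hypotheses (H_pd : posdef H) (G_herm : adj G = G).

Lemma scale_sub_herm (b : C) : b \is Num.real -> adj (b *: H - G) = b *: H - G.
Proof. by case: H_pd => hH _ br; rewrite adjB adjZ (conj_Creal br) hH G_herm. Qed.

Lemma scale_sub_coercive : exists2 mu : C, 0 < mu &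
  eventually (fun b => forall x, b * mu * sqnorm x <= qform (b *: H - G) x).
Proof.
have [nu nu0 hH] := posdef_coercive H_pd.
set M := l1norm G; set mu := nu / 2.
have mu0 : 0 < mu by rewrite divr_gt0.
exists mu => //.
apply: eventuallyW (eventually_gt (divr_ge0 (l1norm_ge0 G) (ltW mu0))) => b b0 hb x.
rewrite ltr_pdivrMr // in hb.
have hG : qform G x <= M * sqnorm x.
  exact: le_trans (real_ler_norm (qform_real x G_herm)) (norm_qform_le G x).
have hbH : b * nu * sqnorm x <= b * qform H x.
  by rewrite -mulrA; apply: ler_wpM2l; [exact: ltW | exact: hH].
rewrite qform_scale_sub; apply: le_trans (lerB hbH hG).
have -> : b * nu * sqnorm x - M * sqnorm x =
    b * mu * sqnorm x + (b * mu - M) * sqnorm x.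
  by rewrite /mu; field.
by rewrite lerDl mulr_ge0 ?sqnorm_ge0 // subr_ge0 ltW.
Qed.

Lemma posdef_scale_sub : eventually (fun b => posdef (b *: H - G)).
Proof.
have [mu mu0 hmu] := scale_sub_coercive.
apply: eventuallyW hmu => b b0.
exact: coercive_posdef (scale_sub_herm (gtr0_real b0)) (mulr_gt0 b0 mu0).
Qed.

Lemma bounded_scale_invmx : bounded (fun b => b *: invmx (b *: H - G)).
Proof.
have [mu mu0 hmu] := scale_sub_coercive.
exists mu^-1; apply: eventuallyW hmu => b b0 hb i j.
have := coercive_invmx_entry (scale_sub_herm (gtr0_real b0)) (mulr_gt0 b0 mu0) hb i j.
by rewrite mxE normrM (gtr0_norm b0) -[mu^-1]mul1r ler_pdivlMr // mulrAC.
Qed.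

Lemma bounded_invmx : bounded (fun b => invmx (b *: H - G)).
Proof.
have [mu mu0 hmu] := scale_sub_coercive.
exists mu^-1; apply: eventuallyW (eventually_and hmu (eventually_gt ler01)).
move=> b b0 [hb b1] i j.
have := coercive_invmx_entry (scale_sub_herm (gtr0_real b0)) (mulr_gt0 b0 mu0) hb i j.
rewrite -[mu^-1]mul1r ler_pdivlMr //; apply: le_trans.
by rewrite mulrC -mulrA ler_peMl ?mulr_ge0 // ltW.
Qed.

Lemma asymptotic_scale_invmx p r (V : 'M[C]_(p, n)) (W : 'M[C]_(n, r)) :
  asymptotic (fun b => b *: (V *m invmx (b *: H - G) *m W)) (V *m invmx H *m W).
Proof.
have uH := posdef_unitmx H_pd.
exists (fun b => V *m (b *: invmx (b *: H - G)) *m G *m invmx H *m W).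
  do 3 apply: boundedM (bounded_cst _).
  exact: boundedM (bounded_cst _) bounded_scale_invmx.
apply: eventuallyW posdef_scale_sub => b b0 /posdef_unitmx uP.
have resolvent : b *: invmx (b *: H - G) = invmx H + invmx (b *: H - G) *m G *m invmx H.
  set P := b *: H - G; have -> : G = b *: H - P by rewrite opprB addrC subrK.
  rewrite mulmxBr mulmxBl -scalemxAr -scalemxAl -(mulmxA _ H) mulmxV // mulmx1.
  by rewrite mulVmx // mul1mx addrC subrK.
rewrite -scalemxAr -!scalemxAl scalerA mulVf ?gt_eqF // scale1r.
by rewrite scalemxAl scalemxAr resolvent mulmxDr mulmxDl !mulmxA.
Qed.

(* Split [b c - d = (b H - G) H^{-1} c + e], where [e] no longer depends on [b]. *)
Lemma asymptotic_quad_invmx p (c d : 'M[C]_(n, p)) :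
  asymptotic (fun b => b^-1 *: (adj (b *: c - d) *m invmx (b *: H - G) *m (b *: c - d)))
    (adj c *m invmx H *m c).
Proof.
have uH := posdef_unitmx H_pd; have [hH _] := H_pd.
set Hi := invmx H; set e := G *m Hi *m c - d.
have hHi : adj Hi = Hi by rewrite adj_invmx // hH.
exists (fun b => - (adj c *m Hi *m G *m Hi *m c) + adj c *m Hi *m e + adj e *m Hi *m c
                 + adj e *m invmx (b *: H - G) *m e).
  apply: boundedD; last exact: boundedM (boundedM (bounded_cst _) bounded_invmx) (bounded_cst _).
  exact: boundedD (boundedD (bounded_cst _) (bounded_cst _)) (bounded_cst _).
apply: eventuallyW posdef_scale_sub => b b0 pP.
have hP := scale_sub_herm (gtr0_real b0).
move PE : (b *: H - G) pP hP => P pP hP; have uP := posdef_unitmx pP.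
have wE : b *: c - d = P *m (Hi *m c) + e.
  by rewrite mulmxA -PE /e !mulmxBl -scalemxAl mulmxV // -scalemxAl mul1mx addrA subrK.
have awE : adj (b *: c - d) = adj c *m Hi *m P + adj e.
  by rewrite wE adjD !adjM hHi hP.
have PHE : adj c *m Hi *m P *m (Hi *m c) =
    b *: (adj c *m Hi *m c) - adj c *m Hi *m G *m Hi *m c.
  by rewrite mulmxA -PE mulmxBr !mulmxBl -scalemxAr -!scalemxAl (mulmxKV uH).
rewrite awE wE mulmx_invmx_expand // PHE (mulmxA _ Hi c) -!addrA.
by rewrite scalerDr scalerA mulVf ?gt_eqF // scale1r.
Qed.

End ScaleSub.

Section BlockMatrices.
Variables (C : numClosedFieldType) (q : nat).
Implicit Types (f g : nat -> 'M[C]_q).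

Lemma Rm0 i : Rm q i (0 : C) = 1%:M.
Proof. by rewrite /Rm scale0r subr0 invmx1. Qed.

Lemma eq_bhank i f g : f =1 g -> bhank i f = bhank i g.
Proof. by move=> fg; apply/matrixP => x y; rewrite !mxE fg. Qed.

Lemma eq_bcol i f g : f =1 g -> bcol i f = bcol i g.
Proof. by move=> fg; apply/matrixP => x y; rewrite !mxE fg. Qed.

Lemma bhank_scale_sub i (a : C) f g :
  bhank i (fun n => a *: f n - g n) = a *: bhank i f - bhank i g.
Proof. by apply/matrixP => x y; rewrite !mxE. Qed.

Lemma bcol_scale_sub i (a : C) f g :
  bcol i (fun n => a *: f n - g n) = a *: bcol i f - bcol i g.
Proof. by apply/matrixP => x y; rewrite !mxE. Qed.

Lemma bcolN i f : bcol i (fun n => - f n) = - bcol i f.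
Proof. by apply/matrixP => x y; rewrite !mxE. Qed.

Lemma bhank_herm i f :
  (forall n, (n <= i + i)%N -> adj (f n) = f n) -> adj (bhank i f) = bhank i f.
Proof.
move=> hf; apply/matrixP => x y; rewrite adj_mxE !mxE addnC -adj_mxE hf //.
by apply: leq_add; rewrite -ltnS.
Qed.

Lemma adj_mxblock m n (B : 'I_m -> 'I_n -> 'M[C]_q) :
  adj (@mxblock C m n (fun _ => q) (fun _ => q) B) =
  @mxblock C n m (fun _ => q) (fun _ => q) (fun l k => adj (B k l)).
Proof. by apply/matrixP => x y; rewrite adj_mxE !mxE. Qed.

Lemma adj_mxcol m (B : 'I_m -> 'M[C]_q) :
  adj (@mxcol C m (fun _ => q) q B) = @mxrow C m (fun _ => q) q (fun l => adj (B l)).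
Proof. by apply/matrixP => x y; rewrite adj_mxE !mxE. Qed.

Lemma mxblock_delta m :
  @mxblock C m m (fun _ => q) (fun _ => q) (fun l k => if l == k then 1%:M else 0) = 1%:M.
Proof.
rewrite -[RHS](@mxdiagZ C m (fun _ => q) 1); apply: eq_mxblock => l k.
by case: eqP => // _; rewrite conform_mx_id.
Qed.

Lemma sum_ord_if_eq (V : zmodType) N l (F : 'I_N -> V) (lN : (l < N)%N) :
  \sum_(m < N) (if (m : nat) == l then F m else 0) = F (Ordinal lN).
Proof. by rewrite (bigD1 (Ordinal lN)) //= eqxx big1 ?addr0 // => m ml; rewrite ifN. Qed.

Definition bembed N : 'M[C]_(bdim q N.+1, bdim q N) :=
  @mxblock C N.+2 N.+1 (fun _ => q) (fun _ => q)
    (fun l k => if (l : nat) == k then 1%:M else 0).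

Lemma adj_bembed N : adj (bembed N) = @mxblock C N.+1 N.+2 (fun _ => q) (fun _ => q)
   (fun l k => if (k : nat) == l then 1%:M else 0).
Proof. by rewrite adj_mxblock; apply: eq_mxblock => l k; case: eqP; rewrite ?adj1 ?adj0. Qed.

Lemma bembed_isometry N : adj (bembed N) *m bembed N = 1%:M.
Proof.
rewrite adj_bembed mul_mxblock -[RHS]mxblock_delta; apply: eq_mxblock => l k.
have lN : (l < N.+2)%N by apply: leqW.
rewrite -(sum_ord_if_eq (fun m : 'I_N.+2 => if (m : nat) == k then 1%:M else 0) lN).
by apply: eq_bigr => m _; do 2 case: eqP => _; rewrite ?mul1mx ?mul0mx.
Qed.

Lemma bhank_bembed N f : adj (bembed N) *m bhank N.+1 f *m bembed N = bhank N f.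
Proof.
rewrite adj_bembed /bembed /bhank !mul_mxblock; apply: eq_mxblock => l k.
have lN : (l < N.+2)%N by apply: leqW.
have kN : (k < N.+2)%N by apply: leqW.
under eq_bigr => m _ do rewrite mulmx_suml.
rewrite exchange_big /= (eq_bigr (fun j : 'I_N.+2 => if (j : nat) == l then
   \sum_(i < N.+2) (if (i : nat) == k then f (j + i)%N else 0) else 0)).
  by rewrite (sum_ord_if_eq _ lN) (sum_ord_if_eq _ kN).
move=> j _; case: eqP => _; last by rewrite big1 // => i _; rewrite !mul0mx.
by apply: eq_bigr => i _; case: eqP => _; rewrite ?mul1mx ?mulmx1 ?mulmx0.
Qed.

Lemma posdef_bhank_trunc N f : posdef (bhank N.+1 f) -> posdef (bhank N f).
Proof.
by move=> pH; rewrite -bhank_bembed; apply: posdef_conj_isometry (bembed_isometry N) pH.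
Qed.

Lemma vv0_isometry : adj (vv C q 0) *m vv C q 0 = 1%:M.
Proof. by rewrite adj_mxcol mul_mxrow_mxcol big_ord1 /= adj1 mul1mx. Qed.

Lemma vv0_coisometry : vv C q 0 *m adj (vv C q 0) = 1%:M.
Proof.
rewrite adj_mxcol mul_mxcol_mxrow -[RHS]mxblock_delta; apply: eq_mxblock => l k.
by rewrite !ord1 /= adj1 mul1mx.
Qed.

Lemma bhank0 f : bhank 0 f = vv C q 0 *m f 0%N *m adj (vv C q 0).
Proof.
rewrite adj_mxcol mxcol_mul mul_mxcol_mxrow /bhank; apply: eq_mxblock => l k.
by rewrite !ord1 /= adj1 mul1mx mulmx1.
Qed.

End BlockMatrices.

Section DyukarevStieltjesAtZero.
Variables (C : numClosedFieldType) (q : nat) (s : nat -> 'M[C]_q).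

Lemma K1_bhank b i : K1 s b i = b *: bhank i s - bhank i (fun n => s n.+1).
Proof. exact: bhank_scale_sub. Qed.

Lemma H2_bhank b i :
  H2 s 0 b i = b *: bhank i (fun n => s n.+1) - bhank i (fun n => s n.+2).
Proof.
rewrite /H2 -bhank_scale_sub; apply: eq_bhank => n.
by apply/matrixP => x y; rewrite /shat !mxE; ring.
Qed.

Lemma K2_bhank i : K2 s 0 i = bhank i (fun n => s n.+1).
Proof. by apply: eq_bhank => n; rewrite oppr0 scale0r add0r. Qed.

Lemma u2_bcol b i : u2 s 0 b i + 0 *: (vv C q i *m s 0) =
  - (b *: bcol i s - bcol i (fun n => s n.+1)).
Proof.
rewrite scale0r addr0 -bcol_scale_sub -bcolN; apply: eq_bcol => -[|n] /=;
  by apply/matrixP => x y; rewrite /u20 /shat !mxE; ring.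
Qed.

Lemma ut2_bcol i : ut2 s 0 i = - bcol i s.
Proof. by rewrite -bcolN; apply: eq_bcol => -[|n] //=; rewrite scale0r add0r. Qed.

Lemma herm_bhank_shift2 i : (forall k, (k <= 2 * i + 2)%N -> adj (s k) = s k) ->
  adj (bhank i (fun n => s n.+2)) = bhank i (fun n => s n.+2).
Proof. by move=> s_herm; apply: bhank_herm => n ni; apply: s_herm; lia. Qed.

Lemma asymptotic_mu i : posdef (bhank i s) ->
  adj (bhank i (fun n => s n.+1)) = bhank i (fun n => s n.+1) ->
  asymptotic (fun b => b *: mu s 0 b i) (Mnu s 0 i).
Proof.
move=> pH hG; rewrite /Mnu Rm0 adj1 !mulmx1.
apply: eq_asymptotic (asymptotic_scale_invmx pH hG (adj (vv C q i)) (vv C q i)) => b.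
by rewrite /mu Rm0 adj1 !mulmx1 K1_bhank.
Qed.

Lemma asymptotic_lam i : posdef (bhank i (fun n => s n.+1)) ->
  adj (bhank i (fun n => s n.+2)) = bhank i (fun n => s n.+2) ->
  asymptotic (fun b => b^-1 *: lam s 0 b i) (Lnu s 0 i).
Proof.
move=> pA hD; rewrite /Lnu Rm0 adj1 !mulmx1 K2_bhank ut2_bcol adjN !(mulNmx, mulmxN) opprK.
apply: eq_asymptotic (asymptotic_quad_invmx pA hD (bcol i s) (bcol i (fun n => s n.+1))).
by move=> b; rewrite /lam Rm0 adj1 !mulmx1 H2_bhank u2_bcol adjN !(mulNmx, mulmxN) opprK.
Qed.

Lemma Mnu0 : posdef (bhank 0 s) -> Mnu s 0 0 = Mpar s 0 0.
Proof.
move=> /posdef_unitmx uH; rewrite /Mnu Rm0 adj1 !mulmx1.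
rewrite -invmx_conj_unitary ?vv0_isometry ?vv0_coisometry //.
by rewrite /H1 bhank0 !mulmxA vv0_isometry mul1mx -mulmxA vv0_isometry mulmx1.
Qed.

Lemma Lnu0 : Lnu s 0 0 = Lpar s 0 0.
Proof. by rewrite /Lnu Rm0 adj1 !mulmx1. Qed.

Lemma asymptotic_mpar j : posdef (bhank j s) -> posdef (bhank j (fun n => s n.+1)) ->
  asymptotic (fun b => b *: mpar s 0 b j) (Mpar s 0 j).
Proof.
case: j => [|j] pH pA; have [hG _] := pA; first by rewrite -Mnu0 //; apply: asymptotic_mu.
have [hG' _] := posdef_bhank_trunc pA.
have := asymptoticB (asymptotic_mu pH hG) (asymptotic_mu (posdef_bhank_trunc pH) hG').
by apply: eq_asymptotic => b; rewrite scalerBr.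
Qed.

Lemma asymptotic_lpar j : (forall k, (k <= 2 * j + 2)%N -> adj (s k) = s k) ->
  posdef (bhank j (fun n => s n.+1)) ->
  asymptotic (fun b => b^-1 *: lpar s 0 b j) (Lpar s 0 j).
Proof.
case: j => [|j] s_herm pA; have hD := herm_bhank_shift2 s_herm.
  by rewrite -Lnu0; apply: asymptotic_lam.
have hD' : adj (bhank j (fun n => s n.+2)) = bhank j (fun n => s n.+2).
  by apply: herm_bhank_shift2 => k kj; apply: s_herm; lia.
have := asymptoticB (asymptotic_lam pA hD) (asymptotic_lam (posdef_bhank_trunc pA) hD').
by apply: eq_asymptotic => b; rewrite scalerBr.
Qed.

End DyukarevStieltjesAtZero.

Theorem mainTheorem12 (C : numClosedFieldType) (q j : nat) (s : nat -> 'M[C]_q) :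
  (forall k, (k <= 2 * j + 2)%N -> adj (s k) = s k) ->
  posdef (bhank j s) ->
  posdef (bhank j (fun n => s n.+1)) ->
  (exists B : C, B \is Num.real /\
     forall b : C, B < b -> posdef (K1 s b j) /\ posdef (H2 s 0 b j)) /\
  mxlim_infty (fun b => b *: mpar s 0 b j) (Mpar s 0 j) /\
  mxlim_infty (fun b => b^-1 *: lpar s 0 b j) (Lpar s 0 j).
Proof.
move=> s_herm pH pA; have [hG _] := pA.
split.
  have [B B0 hB] := eventually_and (posdef_scale_sub pH hG)
                                   (posdef_scale_sub pA (herm_bhank_shift2 s_herm)).
  exists B; split=> [|b /hB]; first exact: ger0_real.
  by rewrite K1_bhank H2_bhank.
by split; apply: asymptotic_lim; [apply: asymptotic_mpar | apply: asymptotic_lpar].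
Qed.
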